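(* Let $\mathfrak{M}$ be a concrete LIiP-model and $\phi$ a formula. Then $\mathfrak{M},\mathtt{0}\models\phi$ if and only if $\mathfrak{M},s\models\phi$ for every input history $s$.
   Context: Fix a finite set $\mathcal{A}$ of agent names containing a distinguished name $\mathsf{CM}$. Messages: $M ::= a \mid B \mid (M,M)$ ($a\in\mathcal{A}$, $B$ optional data constants, pairs). $\mathcal{P}$ is a denumerable set of propositional variables containing atoms $\mathsf{k}_a(M)$ for all $a$, $M$. Formulas: $\phi ::= P \mid \phi\wedge\phi \mid \phi\vee\phi \mid \neg\phi \mid \phi\to\phi \mid [M]\phi$. Input histories are finite words of input events $\mathrm{in}_a(M)$ (''$a$ receives $M$''); $\mathtt{0}$ is the empty history, $\mathrm{in}_a(M)(s)$ extends $s$ by that event, $\star$ is concatenation. Projection: $\pi_a(\mathtt{0})=\mathtt{0}$, $\pi_a(\mathrm{in}_b(M)(s))=\mathrm{in}_b(M)(\pi_a(s))$ if $a\in\{b,\mathsf{CM}\}$ and $\pi_a(s)$ otherwise. $\mathrm{msgs}(s)$ is the set of messages occurring in $s$; $\mathrm{cl}_a(s)$ is the smallest set of messages containing $a$ and $\mathrm{msgs}(\pi_a(s))$ closed under pairing and taking components of pairs. $s\sqsubseteq_a s'$ iff $\pi_a(s)\star\pi_a(s'')=\pi_a(s')$ for some $s''$; ${\sqsubseteq}:={\sqsubseteq_{\mathsf{CM}}}$; $\equiv_a$ is $\sqsubseteq_a\cap\sqsupseteq_a$. Concrete accessibility: $s\,R^c_M\,s'$ iff there is $\tilde s$ with $s\sqsubseteq\tilde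 s$, $M\in\mathrm{cl}_{\mathsf{CM}}(\tilde s)$, $\tilde s\equiv_{\mathsf{CM}}s'$. A concrete LIiP-model consists of the set of all input histories, the order $\sqsubseteq$, the relations $R^c_M$, and a valuation $\mathcal{V}:\mathcal{P}\to 2^{\text{histories}}$ with $\mathcal{V}(\mathsf{k}_a(M))=\{s: M\in\mathrm{cl}_a(s)\}$ and upward closed along $\sqsubseteq$. Satisfaction: atoms via $\mathcal{V}$; $\wedge,\vee$ classically at $s$; $s\models\neg\phi$ iff no $s'\sqsupseteq s$ satisfies $\phi$; $s\models\phi\to\psi$ iff every $s'\sqsupseteq s$ satisfying $\phi$ satisfies $\psi$; $s\models[M]\phi$ iff every $s'$ with $s\,R^c_M\,s'$ satisfies $\phi$. *)

From mathcomp Require Import all_boot.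
From Stdlib Require List.
Set Implicit Arguments. Unset Strict Implicit. Unset Printing Implicit Defensive.

Section LIiP.
Variables (A : finType) (CM : A) (B : Type).

Inductive msg : Type :=
| MAg : A -> msg
| MData : B -> msg
| MPair : msg -> msg -> msg.

Inductive pvar : Type :=
| Know : A -> msg -> pvar
| PV : nat -> pvar.

Inductive form : Type :=
| FVar : pvar -> form
| FAnd : form -> form -> form
| FOr  : form -> form -> form
| FNeg : form -> form
| FImp : form -> form -> form
| FBox : msg -> form -> form.

(* Input events in_a(M) and input histories, stored in chronological order
   (oldest event first). *)
Definition event := (A * msg)%type.
Definition history := seq event.

Definition hempty : history := [::].
Definition hin (a : A) (M : msg) (s : history) : history := rcons s (a, M).
Definition hstar (s s' : history) : history := s ++ s'.

Definition proj (a : A) (s : history) : history :=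
  filter (fun e : event => (a == e.1) || (a == CM)) s.

Definition msgs (s : history) (M : msg) : Prop := exists b : A, Stdlib.Lists.List.In (b, M) s.

Inductive cl (a : A) (s : history) : msg -> Prop :=
| cl_self : cl a s (MAg a)
| cl_msgs M : msgs (proj a s) M -> cl a s M
| cl_pair M1 M2 : cl a s M1 -> cl a s M2 -> cl a s (MPair M1 M2)
| cl_fst M1 M2 : cl a s (MPair M1 M2) -> cl a s M1
| cl_snd M1 M2 : cl a s (MPair M1 M2) -> cl a s M2.

Definition le_a (a : A) (s s' : history) : Prop :=
  exists s'' : history, hstar (proj a s) (proj a s'') = proj a s'.

Definition le (s s' : history) : Prop := le_a CM s s'.

Definition equiv_a (a : A) (s s' : history) : Prop := le_a a s s' /\ le_a a s' s.

Definition Rc (M : msg) (s s' : history) : Prop :=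
  exists st : history, le s st /\ cl CM st M /\ equiv_a CM st s'.

(* A concrete LIiP-model is determined by its valuation. *)
Record concrete_model : Type := {
  val : pvar -> history -> Prop;
  val_know : forall a M s, val (Know a M) s <-> cl a s M;
  val_up : forall p s s', val p s -> le s s' -> val p s'
}.

Fixpoint sat (V : pvar -> history -> Prop) (s : history) (f : form) : Prop :=
  match f with
  | FVar p => V p s
  | FAnd f1 f2 => sat V s f1 /\ sat V s f2
  | FOr f1 f2 => sat V s f1 \/ sat V s f2
  | FNeg f1 => forall s', le s s' -> ~ sat V s' f1
  | FImp f1 f2 => forall s', le s s' -> sat V s' f1 -> sat V s' f2
  | FBox M f1 => forall s', Rc M s s' -> sat V s' f1
  end.

Definition models (Mo : concrete_model) (s : history) (f : form) : Prop :=
  sat (val Mo) s f.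
End LIiP.

From mathcomp Require Import all_boot.

(* Satisfaction is persistent along the order [le] (the clauses for [FNeg],
   [FImp] and [FBox] quantify over upward-closed sets of histories), and the
   empty history lies below every history. *)

Section Persistence.
Variables (A : finType) (CM : A) (B : Type).

Lemma le_trans (s1 s2 s3 : history A B) :
  le CM s1 s2 -> le CM s2 s3 -> le CM s1 s3.
Proof.
move=> [u Hu] [v Hv]; exists (u ++ v).
move: Hu Hv; rewrite /hstar /proj filter_cat => Hu Hv.
by rewrite catA Hu.
Qed.

Lemma le_hempty (s : history A B) : le CM (hempty A B) s.
Proof. by exists s. Qed.

Lemma Rc_le_trans (M : msg A B) (s1 s2 s3 : history A B) :
  le CM s1 s2 -> Rc CM M s2 s3 -> Rc CM M s1 s3.
Proof. by move=> le12 [st [le2st rest]]; exists st; split=> //; apply: le_trans le2st. Qed.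

Lemma models_le (Mo : concrete_model CM B) (phi : form A B) (s s' : history A B) :
  models Mo s phi -> le CM s s' -> models Mo s' phi.
Proof.
rewrite /models; elim: phi s s' =>
  [p|f1 IH1 f2 IH2|f1 IH1 f2 IH2|f1 IH1|f1 IH1 f2 IH2|M f1 IH1] s s' /=.
- exact: val_up.
- by move=> [H1 H2] le_ss'; split; [apply: IH1 H1 _|apply: IH2 H2 _].
- by move=> [H1|H2] le_ss'; [left; apply: IH1 H1 _|right; apply: IH2 H2 _].
- by move=> H le_ss' t le_s't; apply: H; apply: le_trans le_s't.
- by move=> H le_ss' t le_s't; apply: H; apply: le_trans le_s't.
- by move=> H le_ss' t Rs't; apply: H; apply: Rc_le_trans Rs't.
Qed.

End Persistence.

Theorem proposition3 (A : finType) (CM : A) (B : Type)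
    (Mo : concrete_model CM B) (phi : form A B) :
  models Mo (hempty A B) phi <-> (forall s : history A B, models Mo s phi).
Proof.
split; last exact.
by move=> H0 s; apply: models_le H0 _; apply: le_hempty.
Qed.
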